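(* Let $\mathcal S$ be a nonempty set of vertices and $o$ a vertex such that at least one $c\in\mathcal S$ has a directed path to $o$. Let $\delta_{\min}=\min_{c\in\mathcal S}\delta_{co}$. Assume the open loop $M(s)$ is strictly proper with relative degree $\chi=\deg(ap)-\deg(bq)\ge1$. Then the transfer function $$T_{\mathcal S o}(s)=e_o^T\big(I+M(s)L\big)^{-1}M(s)\sum_{c\in\mathcal S}e_c,$$ from a common input fed to all nodes of $\mathcal S$ to $y_o$, has relative degree $(\delta_{\min}+1)\chi$.
   Context: $\mathcal G$ is a weighted directed graph on $\{1,\dots,N\}$ with adjacency matrix $A=[a_{ij}]$. Here $a_{ij}>0$ if there is an arc from $j$ to $i$ and $a_{ij}=0$ otherwise (no self-loops). The Laplacian is $L=D-A$ with $D=\mathrm{diag}(\sum_j a_{ij})$. A directed path from $u$ to $w$ is a sequence of distinct vertices $u=v_0,\dots,v_\ell=w$ with an arc from $v_k$ to $v_{k+1}$ for each $k$, and $\ell$ is its length. $\delta_{uw}$ is the length of a shortest directed path from $u$ to $w$; it is $\infty$ if none exists. $e_i$ is the $i$-th canonical basis vector. $a,b,p,q$ are nonzero real polynomials and $M(s)=\frac{b(s)q(s)}{a(s)p(s)}$. The relative degree of a rational function is the degree of its denominator minus the degree of its numerator. *)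

From HB Require Import structures.
From mathcomp Require Import all_boot all_order all_algebra.
Set Implicit Arguments. Unset Strict Implicit. Unset Printing Implicit Defensive.
Import Order.TTheory GRing.Theory Num.Theory.
Local Open Scope ring_scope.

Notation ratfun R := {fraction {poly R}}.
Definition polyF (R : realFieldType) (x : {poly R}) : ratfun R := tofrac x.

(* [x] has relative degree r : x = n/d with n, d nonzero polynomials and
   deg d - deg n = r  (size = deg + 1, so the difference of sizes is used).
   This is independent of the chosen representation. *)
Definition has_reldeg (R : realFieldType) (x : ratfun R) (r : int) : Prop :=
  exists n d : {poly R}, [/\ n != 0, d != 0, x = polyF n / polyF d &
                            (size d)%:Z - (size n)%:Z = r].

Definition arc (R : realFieldType) (N : nat) (A : 'M[R]_N) (j i : 'I_N) : bool :=
  0 < A i j.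

(* A directed path from u to w: u = v_0, v_1 = p_1, ..., v_l = p_l = w,
   distinct vertices, arcs v_k -> v_{k+1}; its length is size p. *)
Definition dpath (R : realFieldType) (N : nat) (A : 'M[R]_N) (u w : 'I_N)
    (p : seq 'I_N) : bool :=
  [&& path (arc A) u p, last u p == w & uniq (u :: p)].

Definition has_path_len (R : realFieldType) (N : nat) (A : 'M[R]_N) (u w : 'I_N)
    (l : nat) : Prop :=
  exists p, dpath A u w p /\ size p = l.

Definition is_min_dist (R : realFieldType) (N : nat) (A : 'M[R]_N)
    (S : {set 'I_N}) (o : 'I_N) (d : nat) : Prop :=
  (exists2 c, c \in S & has_path_len A c o d) /\
  (forall c l, c \in S -> has_path_len A c o l -> (d <= l)%N).

Definition laplacian (R : realFieldType) (N : nat) (A : 'M[R]_N) : 'M[R]_N :=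
  diag_mx (\row_i \sum_j A i j) - A.

Definition transfer (R : realFieldType) (N : nat) (A : 'M[R]_N)
    (S : {set 'I_N}) (o : 'I_N) (M : ratfun R) : ratfun R :=
  let L := map_mx (fun x => polyF x%:P) (laplacian A) in
  ((delta_mx 0 o : 'rV[ratfun R]_N) *m invmx (1%:M + M *: L) *m
     (M *: \col_(i < N) (i \in S)%:R)) 0 0.

(* Write M = u/v and B(s) = I + s L over R[s].  Evaluating polynomials at s = M, the transfer
   function is M z(M) / Q(M) with Q = det B and z = e_o^T adj(B) 1_S, and Q(0) = 1.  Since
   adj(B) = Q (I + s L)^-1 = Q (sum_k (-s)^k L^k) in R[[s]], z(s) = s^delta P(s) with
   P(0) = (-1)^delta e_o^T L^delta 1_S: the entries (L^k)_oc vanish for k < delta because no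
   walk of length k leads from c to o, while -L is Metzler, so e_o^T (-L)^delta 1_S is a sum of
   nonnegative terms, the one along a shortest path being positive.  Finally, substituting the
   strictly proper M = u/v into a polynomial f with f(0) <> 0 gives relative degree 0, because
   v^(deg f) f(u/v) is dominated by f(0) v^(deg f); relative degree being additive,
   T = M^(delta+1) P(M) / Q(M) has relative degree (delta+1) chi. *)

From Pilot Require Import Defs.
From HB Require Import structures.
From mathcomp Require Import all_boot all_order all_algebra.
From mathcomp Require Import ring zify.
Import Order.TTheory GRing.Theory Num.Theory.
Set Implicit Arguments. Unset Strict Implicit. Unset Printing Implicit Defensive.
Local Open Scope ring_scope.

Definition walk (T : eqType) (e : rel T) (x y : T) (w : seq T) : bool :=
  path e x w && (last x w == y).

Lemma eq_walk (T : eqType) (e e' : rel T) :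
  e =2 e' -> forall x y w, walk e x y w = walk e' x y w.
Proof. by move=> ee' x y w; rewrite /walk (eq_path ee'). Qed.

Section MatrixWalks.
Variables (R : pzRingType) (n : nat).

Definition mxarc (B : 'M[R]_n) : rel 'I_n := fun j i => (i != j) && (B i j != 0).

Lemma mxarcN (B : 'M[R]_n) : mxarc (- B) =2 mxarc B.
Proof. by move=> j i; rewrite /mxarc mxE oppr_eq0. Qed.

Lemma mxpow_neq0_walk (B : 'M[R]_n) k i j :
  (B ^+ k) i j != 0 -> exists2 w, walk (mxarc B) j i w & (size w <= k)%N.
Proof.
elim: k j => [|k IH] j.
  rewrite expr0 mxE; have [-> _|] := eqVneq i j; last by rewrite mulr0n eqxx.
  by exists [::]; rewrite /walk /= ?eqxx.
rewrite exprSr mxE => nz.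
have [m _ nzm] : exists2 m, m \in 'I_n & (B ^+ k) i m * B m j != 0.
  apply/exists_inP; apply: contraR nz => /exists_inPn Hz.
  by rewrite big1 // => m _; apply/eqP/negbNE/Hz.
have [w wm sw] : exists2 w, walk (mxarc B) m i w & (size w <= k)%N.
  by apply: IH; apply: contraNneq nzm => ->; rewrite mul0r.
have [mj|mj] := eqVneq m j; first by exists w; rewrite -?mj // ltnW.
have nzmj : B m j != 0 by apply: contraNneq nzm => ->; rewrite mulr0.
by exists (m :: w) => //; move: wm; rewrite /walk /= /mxarc mj nzmj.
Qed.

Lemma mxpow_eq0_walks_gt (B : 'M[R]_n) k i j :
  (forall w, walk (mxarc B) j i w -> (k < size w)%N) -> (B ^+ k) i j = 0.
Proof.
move=> Hj; apply/eqP; apply: contraT => /mxpow_neq0_walk[w /Hj].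
by rewrite ltnNge => /negbTE ->.
Qed.
End MatrixWalks.

Section MetzlerPowers.
Variables (R : numDomainType) (n : nat) (B : 'M[R]_n).
Hypothesis B_offdiag_ge0 : forall i j, i != j -> 0 <= B i j.

Lemma metzler_pow_term_ge0 k i j m :
  (forall m', (forall w, walk (mxarc B) m' i w -> (k <= size w)%N) ->
     0 <= (B ^+ k) i m') ->
  (forall w, walk (mxarc B) j i w -> (k < size w)%N) ->
  0 <= (B ^+ k) i m * B m j.
Proof.
move=> ge0k Hj; have [->|mj] := eqVneq m j; first by rewrite mxpow_eq0_walks_gt ?mul0r.
have [->|nzmj] := eqVneq (B m j) 0; first by rewrite mulr0.
rewrite mulr_ge0 ?B_offdiag_ge0 // ge0k // => w wm.
by apply: (Hj (m :: w)); move: wm; rewrite /walk /= /mxarc mj nzmj.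
Qed.

Lemma metzler_pow_ge0 k i j :
  (forall w, walk (mxarc B) j i w -> (k <= size w)%N) -> 0 <= (B ^+ k) i j.
Proof.
elim: k j => [|k IH] j Hj; first by rewrite expr0 mxE ler0n.
by rewrite exprSr mxE sumr_ge0 // => m _; apply: metzler_pow_term_ge0.
Qed.

Lemma metzler_pow_gt0 k i j w :
  (forall w', walk (mxarc B) j i w' -> (k <= size w')%N) ->
  walk (mxarc B) j i w -> size w = k -> 0 < (B ^+ k) i j.
Proof.
elim: k j w => [|k IH] j [|m w] Hj //=.
  by rewrite /walk /= => /eqP -> _; rewrite expr0 mxE eqxx ltr01.
rewrite /walk /= => /andP[/andP[/andP[mj nzmj] wm] wl] [sw].
have Hm w' : walk (mxarc B) m i w' -> (k <= size w')%N.
  by move=> wm'; apply: (Hj (m :: w')); move: wm'; rewrite /walk /= /mxarc mj nzmj.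
rewrite exprSr mxE (bigD1 m) //= ltr_wpDr ?sumr_ge0 // => [m' _|].
  by apply: metzler_pow_term_ge0 => // m'' /metzler_pow_ge0.
rewrite mulr_gt0 ?(IH m w) ?/walk ?wm ?wl //.
by rewrite lt0r nzmj B_offdiag_ge0.
Qed.
End MetzlerPowers.

Section LaplacianWalks.
Variables (R : realFieldType) (n : nat) (A : 'M[R]_n).
Hypotheses (A_ge0 : forall i j, 0 <= A i j) (A_loopless : forall i, A i i = 0).

Lemma mxarc_laplacian : mxarc (laplacian A) =2 Defs.arc A.
Proof.
move=> j i; rewrite /mxarc /Defs.arc /laplacian !mxE.
have [->|ij] := eqVneq i j; first by rewrite A_loopless ltxx.
by rewrite mulr0n sub0r oppr_eq0 lt0r A_ge0 andbT.
Qed.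

Lemma laplacianN_offdiag_ge0 i j : i != j -> 0 <= (- laplacian A) i j.
Proof. by move=> ij; rewrite !mxE (negbTE ij) mulr0n sub0r opprK A_ge0. Qed.

Lemma min_dist_le_walk (S : {set 'I_n}) (o c : 'I_n) (d : nat) (w : seq 'I_n) :
  is_min_dist A S o d -> c \in S -> walk (Defs.arc A) c o w -> (d <= size w)%N.
Proof.
move=> [_ dmin] cS /andP[wp]; case: (shortenP wp) => w' w'p w'u w'w w'o.
apply: leq_trans (dmin c _ cS _) (uniq_leq_size _ w'w); last by case/andP: w'u.
by exists w'; rewrite /dpath w'p w'o w'u.
Qed.
End LaplacianWalks.

Definition resolvent (R : comNzRingType) (n : nat) (L : 'M[R]_n) : 'M[{poly R}]_n :=
  1%:M + 'X *: map_mx polyC L.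

Section Resolvent.
Variables (R : comNzRingType) (n : nat) (L : 'M[R]_n) (e : 'rV[R]_n) (c : 'cV[R]_n).

Lemma horner0_det_resolvent : (\det (resolvent L)).[0] = 1.
Proof.
rewrite -[_.[0]]/(horner_eval 0 _) -det_map_mx /resolvent map_mxD map_mxZ /=.
by rewrite horner_evalE hornerX scale0r addr0 map_scalar_mx /= horner_evalE hornerC det1.
Qed.

Let moment k := (e *m L ^+ k *m c) 0 0.
Let adj_moment k :=
  (map_mx polyC e *m \adj (resolvent L) *m map_mx polyC (L ^+ k *m c)) 0 0.

Lemma adj_moment_rec k :
  adj_moment k = \det (resolvent L) * (moment k)%:P - 'X * adj_moment k.+1.
Proof.
set Q := \det (resolvent L); set rX := map_mx polyC e *m \adj (resolvent L).
have rXE : rX = Q *: map_mx polyC e - 'X *: (rX *m map_mx polyC L).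
  have : rX *m resolvent L = Q *: map_mx polyC e.
    by rewrite -mulmxA mul_adj_mx mul_mx_scalar.
  by rewrite /resolvent mulmxDr mulmx1 -scalemxAr => <-; rewrite addrK.
have shiftE :
    map_mx polyC L *m map_mx polyC (L ^+ k *m c) = map_mx polyC (L ^+ k.+1 *m c).
  by rewrite -map_mxM mulmxA exprS mulmxE.
rewrite /adj_moment -/rX {1}rXE mulmxBl -!scalemxAl -mulmxA shiftE -map_mxM mulmxA.
by rewrite /moment !mxE.
Qed.

Lemma adj_moment_expand m : adj_moment 0 =
  \sum_(k < m) \det (resolvent L) * (- 'X) ^+ k * (moment k)%:P +
  (- 'X) ^+ m * adj_moment m.
Proof.
elim: m => [|m IH]; first by rewrite big_ord0 add0r mul1r.
by rewrite big_ord_recr /= IH adj_moment_rec exprSr; ring.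
Qed.

Lemma adj_resolvent_factor d :
  (forall k, (k < d)%N -> (e *m L ^+ k *m c) 0 0 = 0) ->
  exists2 P, (map_mx polyC e *m \adj (resolvent L) *m map_mx polyC c) 0 0 = 'X^d * P &
             P.[0] = (-1) ^+ d * (e *m L ^+ d *m c) 0 0.
Proof.
move=> moment_lt_d; set Q := \det (resolvent L).
exists ((-1) ^+ d * (Q * (moment d)%:P - 'X * adj_moment d.+1)).
  have -> : c = L ^+ 0 *m c by rewrite expr0 mul1mx.
  rewrite -/(adj_moment 0) (adj_moment_expand d.+1).
  rewrite big_ord_recr big1 /= => [|k _]; last by rewrite /moment moment_lt_d ?mulr0.
  by rewrite add0r -/Q exprSr (exprNn 'X); ring.
rewrite /moment !(hornerM, hornerD, hornerN) hornerX horner0_det_resolvent.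
by rewrite hornerC horner_exp hornerN hornerC mul0r mul1r subr0.
Qed.
End Resolvent.

Section HornerFrac.
Variable R : idomainType.

Definition horner_frac (x : {fraction {poly R}}) :
    {rmorphism {poly R} -> {fraction {poly R}}} :=
  horner_morph (fun a : R => mulrC x ((@tofrac _ \o polyC)%FUN a)).

Lemma horner_fracX x : horner_frac x 'X = x.
Proof. exact: horner_morphX. Qed.

Lemma horner_fracC x a : horner_frac x a%:P = tofrac a%:P.
Proof. exact: horner_morphC. Qed.

Definition homogenize (f u v : {poly R}) : {poly R} :=
  \sum_(k < size f) f`_k *: (u ^+ k * v ^+ ((size f).-1 - k)).

Lemma horner_frac_homogenize (f u v : {poly R}) : v != 0 ->
  horner_frac (tofrac u / tofrac v) f =
  tofrac (homogenize f u v) / tofrac (v ^+ (size f).-1).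
Proof.
move=> v0; have vF : tofrac v != 0 by rewrite tofrac_eq0.
rewrite /horner_frac /= /horner_morph (horner_coef_wide _ (n := size f)); last first.
  exact: size_poly.
rewrite /homogenize rmorph_sum mulr_suml; apply: eq_bigr => k _.
have km : (k <= (size f).-1)%N by rewrite -ltnS (leq_trans (ltn_ord k)) ?leqSpred.
rewrite coef_map -mul_polyC !rmorphM !rmorphXn /= expr_div_n -{2}(subnKC km) exprD.
by rewrite -mulrA -mulf_div (divff (expf_neq0 _ vF)) mulr1.
Qed.

Lemma size_homogenize (f u v : {poly R}) : v != 0 -> f`_0 != 0 ->
  (size u < size v)%N -> size (homogenize f u v) = ((size v).-1 * (size f).-1).+1.
Proof.
move=> v0 f0 uv; have sf : (0 < size f)%N.
  by rewrite lt0n size_poly_eq0; apply: contraNneq f0 => ->; rewrite coef0.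
rewrite /homogenize -(prednK sf) big_ord_recl /= subn0 expr0 mul1r.
set m := (size f).-1; have vm0 : v ^+ m != 0 by rewrite expf_neq0.
have szvm : size (v ^+ m) = ((size v).-1 * m).+1 by rewrite (polySpred vm0) size_exp.
rewrite size_polyDl size_scale ?szvm //.
rewrite ltnS (leq_trans (size_sum _ _ _)) //; apply/bigmax_leqP => i _.
rewrite (leq_trans (size_scale_leq _ _)) // (leq_trans (size_polyMleq _ _)) //.
have := size_poly_exp_leq v (m - bump 0 i); have := ltn_ord i.
have [->|u0] := eqVneq u 0.
  rewrite expr0n /= size_poly0 /bump /=; move: (size v) (size (v ^+ _)); nia.
have := size_poly_exp_leq u (bump 0 i); have : (0 < size u)%N by rewrite size_poly_gt0.
move: uv; rewrite /bump /=; move: (size u) (size v) (size (u ^+ _)) (size (v ^+ _)).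
nia.
Qed.
End HornerFrac.

Section RelativeDegree.
Variable R : realFieldType.
Implicit Types (x y : ratfun R) (r s : int).

Lemma has_reldeg_neq0 x r : has_reldeg x r -> x != 0.
Proof.
by case=> [n [d [n0 d0 -> _]]]; rewrite mulf_neq0 ?invr_eq0 /polyF ?tofrac_eq0.
Qed.

Lemma has_reldeg1 : has_reldeg (1 : ratfun R) 0.
Proof. by exists 1, 1; rewrite /polyF tofrac1 divr1 subrr oner_neq0. Qed.

Lemma has_reldegM x y r s :
  has_reldeg x r -> has_reldeg y s -> has_reldeg (x * y) (r + s).
Proof.
move=> [n1 [d1 [n10 d10 -> <-]]] [n2 [d2 [n20 d20 -> <-]]].
exists (n1 * n2), (d1 * d2); split; rewrite ?mulf_neq0 //.
  by rewrite /polyF !tofracM mulf_div.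
have sizeMz (a b c d : nat) : (0 < a)%N -> (0 < b)%N -> (0 < c)%N -> (0 < d)%N ->
    (c + d).-1%:Z - (a + b).-1%:Z = (c%:Z - a%:Z) + (d%:Z - b%:Z) :> int.
  by move=> *; lia.
by rewrite !size_mul // sizeMz ?size_poly_gt0.
Qed.

Lemma has_reldegV x r : has_reldeg x r -> has_reldeg x^-1 (- r).
Proof.
move=> [n [d [n0 d0 -> <-]]]; exists d, n; split=> //.
  by rewrite invf_div.
by rewrite opprB.
Qed.

Lemma has_reldegX x r k : has_reldeg x r -> has_reldeg (x ^+ k) (r *+ k).
Proof.
move=> xr; elim: k => [|k IH]; first exact: has_reldeg1.
by rewrite exprSr mulrSr; apply: has_reldegM.
Qed.
Lemma has_reldeg_horner_frac x r (f : {poly R}) :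
  0 < r -> has_reldeg x r -> f`_0 != 0 -> has_reldeg (horner_frac x f) 0.
Proof.
move=> r_gt0 [n [d [n0 d0 -> nd]]] f0.
have lt_nd : (size n < size d)%N by rewrite -ltz_nat -subr_gt0 nd.
have dm0 : d ^+ (size f).-1 != 0 by rewrite expf_neq0.
have szh := size_homogenize d0 f0 lt_nd.
exists (homogenize f n d), (d ^+ (size f).-1); split=> //.
- by rewrite -size_poly_eq0 szh.
- exact: horner_frac_homogenize.
- by rewrite szh (polySpred dm0) size_exp subrr.
Qed.
End RelativeDegree.

Lemma mulmx_map_invmxE (R : comNzRingType) (F : fieldType) (f : {rmorphism R -> F})
    (n : nat) (B : 'M[R]_n) (e : 'rV[R]_n) (c : 'cV[R]_n) : f (\det B) != 0 ->
  (map_mx f e *m invmx (map_mx f B) *m map_mx f c) 0 0 =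
  f ((e *m \adj B *m c) 0 0) / f (\det B).
Proof.
move=> nz; have unitB : map_mx f B \in unitmx by rewrite unitmxE det_map_mx unitfE.
rewrite /invmx unitB det_map_mx -map_mx_adj -scalemxAr -scalemxAl -!map_mxM.
by rewrite mxE mxE mulrC.
Qed.

Lemma transfer_resolventE (R : realFieldType) (n : nat) (A : 'M[R]_n) S o x :
  let L := laplacian A in
  horner_frac x (\det (resolvent L)) != 0 ->
  transfer A S o x =
  horner_frac x ('X * (map_mx polyC (delta_mx 0 o : 'rV[R]_n) *m \adj (resolvent L) *m
                       map_mx polyC (\col_i (i \in S)%:R)) 0 0) /
  horner_frac x (\det (resolvent L)).
Proof.
move=> L nz.
have mapB : map_mx (horner_frac x) (resolvent L) =
    1%:M + x *: map_mx (fun a => polyF a%:P) L.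
  rewrite map_mxD map_scalar_mx rmorph1 map_mxZ horner_fracX; congr (_ + _ *: _).
  by apply/matrixP => i j; rewrite !mxE horner_fracC.
have mapc : x *: \col_i (i \in S)%:R =
    map_mx (horner_frac x) ('X *: map_mx polyC (\col_i (i \in S)%:R)).
  rewrite map_mxZ horner_fracX; congr (_ *: _).
  by apply/matrixP => i j; rewrite !mxE horner_fracC !rmorph_nat.
rewrite /transfer -/L -mapB mapc -[delta_mx 0 o](map_delta_mx (horner_frac x)).
by rewrite mulmx_map_invmxE // -scalemxAr mxE map_delta_mx.
Qed.

Lemma delta_mx_col_setE (R : pzRingType) (n : nat) (B : 'M[R]_n) (S : {set 'I_n}) o :
  ((delta_mx 0 o : 'rV[R]_n) *m B *m \col_i (i \in S)%:R) 0 0 = \sum_(j in S) B o j.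
Proof.
rewrite -rowE mxE [RHS]big_mkcond /=; apply: eq_bigr => j _.
by rewrite !mxE; case: (j \in S); rewrite ?mulr1 ?mulr0.
Qed.

Lemma exprN_mx (R : pzRingType) (n : nat) (B : 'M[R]_n) k :
  (- B) ^+ k = (-1) ^+ k *: B ^+ k.
Proof.
elim: k => [|k IH]; first by rewrite !expr0 scale1r.
by rewrite !exprSr IH mulrN -!mulmxE -scalemxAl mulrN1 scaleNr.
Qed.

Section LaplacianMoments.
Variables (R : realFieldType) (n : nat) (A : 'M[R]_n).
Hypotheses (A_ge0 : forall i j, 0 <= A i j) (A_loopless : forall i, A i i = 0).
Variables (S : {set 'I_n}) (o : 'I_n) (dmin : nat).
Hypothesis hdmin : is_min_dist A S o dmin.

Let L := laplacian A.

Lemma laplacian_walk_size_ge j w : j \in S ->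
  walk (mxarc (- L)) j o w -> (dmin <= size w)%N.
Proof.
move=> jS; rewrite (eq_walk (mxarcN L)) (eq_walk (mxarc_laplacian A_ge0 A_loopless)).
exact: min_dist_le_walk hdmin jS.
Qed.

Lemma laplacian_moment_eq0 k : (k < dmin)%N -> \sum_(j in S) (L ^+ k) o j = 0.
Proof.
move=> lt_kd; apply: big1 => j jS; apply: mxpow_eq0_walks_gt => w.
rewrite -(eq_walk (mxarcN L)) => /(laplacian_walk_size_ge jS); exact: leq_trans.
Qed.

Lemma laplacian_moment_neq0 : \sum_(j in S) (L ^+ dmin) o j != 0.
Proof.
have [c cS [w [/and3P[wp wo _] sw]]] := hdmin.1.
have Lwalk : walk (mxarc (- L)) c o w.
  by rewrite (eq_walk (mxarcN L)) (eq_walk (mxarc_laplacian A_ge0 A_loopless)) /walk wp.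
have Loffdiag := laplacianN_offdiag_ge0 A_ge0.
have -> : \sum_(j in S) (L ^+ dmin) o j =
    (-1) ^+ dmin * \sum_(j in S) ((- L) ^+ dmin) o j.
  by rewrite mulr_sumr; apply: eq_bigr => j _; rewrite exprN_mx mxE signrMK.
rewrite mulf_neq0 ?signr_eq0 // gt_eqF // (bigD1 c) //= ltr_wpDr ?sumr_ge0 //.
  move=> j /andP[jS _]; apply: metzler_pow_ge0 => // w'.
  exact: laplacian_walk_size_ge.
apply: (metzler_pow_gt0 Loffdiag _ Lwalk sw) => w'.
exact: laplacian_walk_size_ge.
Qed.
End LaplacianMoments.

Theorem mainTheorem11 (R : realFieldType) (N : nat) (A : 'M[R]_N)
  (hA : forall i j, 0 <= A i j) (hloop : forall i, A i i = 0)
  (S : {set 'I_N}) (o : 'I_N) (hS : S != set0)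
  (hreach : exists2 c, c \in S & exists l, has_path_len A c o l)
  (dmin : nat) (hdmin : is_min_dist A S o dmin)
  (a b p q : {poly R}) (ha : a != 0) (hb : b != 0) (hp : p != 0) (hq : q != 0)
  (hproper : (size (b * q)%R < size (a * p)%R)%N) :
  let M := polyF (b * q) / polyF (a * p) in
  let chi := (size (a * p)%R - size (b * q)%R)%N in
  has_reldeg (transfer A S o M) ((dmin.+1 * chi)%N)%:Z.
Proof.
(* [hS] and [hreach] are consequences of [hdmin]. *)
move=> M chi; set L := laplacian A.
have reldegM : has_reldeg M chi.
  exists (b * q), (a * p); split; rewrite ?mulf_neq0 //.
  by rewrite subzn // ltnW.
have chi_gt0 : 0 < chi%:Z by rewrite ltz_nat subn_gt0.
have moment_eq0 k : (k < dmin)%N ->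
    ((delta_mx 0 o : 'rV_N) *m L ^+ k *m \col_i (i \in S)%:R) 0 0 = 0.
  by move=> lt_kd; rewrite delta_mx_col_setE (laplacian_moment_eq0 hA hloop hdmin).
have [P adjE P0] := adj_resolvent_factor moment_eq0.
have P0_neq0 : P`_0 != 0.
  rewrite -horner_coef0 P0 delta_mx_col_setE mulf_neq0 ?signr_eq0 //.
  exact/(laplacian_moment_neq0 hA hloop hdmin).
have Q0_neq0 : (\det (resolvent L))`_0 != 0.
  by rewrite -horner_coef0 horner0_det_resolvent oner_neq0.
have reldegP := has_reldeg_horner_frac chi_gt0 reldegM P0_neq0.
have reldegQ := has_reldeg_horner_frac chi_gt0 reldegM Q0_neq0.
rewrite transfer_resolventE ?(has_reldeg_neq0 reldegQ) // adjE mulrA -exprS.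
rewrite rmorphM rmorphXn horner_fracX.
have := has_reldegM (has_reldegM (has_reldegX dmin.+1 reldegM) reldegP)
                    (has_reldegV reldegQ).
by rewrite subr0 addr0 -mulr_natr natz mulnC PoszM.
Qed.
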